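(* Let $L$ be a planar semimodular lattice with more than two elements and let $R$ be a rectangular extension of $L$. Then $R$ is a congruence-preserving extension of $L$, that is, the map $\mathrm{Con}\,R\to\mathrm{Con}\,L$, $\alpha\mapsto\alpha\cap(L\times L)$, is a lattice isomorphism.
   Context: All lattices are finite. A planar lattice is a finite lattice that has a planar Hasse diagram. For a planar diagram $D$ of a planar lattice, $C_l(D)$ and $C_r(D)$ denote its left and right boundary chains. A rectangular lattice is a planar semimodular lattice $R$ having a planar diagram $D$ such that $C_l(D)\setminus\{0,1\}$ contains exactly one element that is doubly irreducible in $R$ (the left corner $c_l$), $C_r(D)\setminus\{0,1\}$ contains exactly one doubly irreducible element (the right corner $c_r$), and $c_l\wedge c_r=0$, $c_l\vee c_r=1$. A rectangular extension of a planar semimodular lattice $L$ is a lattice $R$ such that: (a) $R$ is rectangular; (b) $L$ is a cover-preserving $\{0,1\}$-sublattice of $R$ (a sublattice containing $0_R,1_R$ such that $x\prec y$ in $L$ implies $x\prec y$ in $R$); (c) every $x\in R$ that has a lower cover outside $L$ has at most two lower covers in $R$. *)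

From HB Require Import structures.
From mathcomp Require Import all_boot all_order all_algebra.
Set Implicit Arguments. Unset Strict Implicit. Unset Printing Implicit Defensive.
Import Order.Theory GRing.Theory Num.Theory.

Section LatticeNotions.
Context {d : Order.disp_t} {T : finTBLatticeType d}.
Local Open Scope order_scope.

Definition covers (x y : T) : bool :=
  (x < y) && [forall z : T, ~~ ((x < z) && (z < y))].

Definition lower_covers (x : T) : {set T} := [set y | covers y x].
Definition upper_covers (x : T) : {set T} := [set y | covers x y].

(* In a finite lattice: join-irreducible = exactly one lower cover,
   meet-irreducible = exactly one upper cover. *)
Definition join_irreducible (x : T) : bool := #|lower_covers x| == 1%N.
Definition meet_irreducible (x : T) : bool := #|upper_covers x| == 1%N.
Definition doubly_irreducible (x : T) : bool :=
  join_irreducible x && meet_irreducible x.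

Definition semimodular : Prop :=
  forall a b c : T, covers a b ->
    (a `|` c == b `|` c) || covers (a `|` c) (b `|` c).

Definition is_congruence (th : {set T * T}) : Prop :=
  [/\ forall x, (x, x) \in th,
      forall x y, (x, y) \in th -> (y, x) \in th,
      forall x y z, (x, y) \in th -> (y, z) \in th -> (x, z) \in th &
      forall x y u v, (x, y) \in th -> (u, v) \in th ->
        ((x `&` u, y `&` v) \in th) /\ ((x `|` u, y `|` v) \in th)].

(* lattice operations in Con T: meet = intersection,
   join = least congruence containing both *)
Definition cong_meet (th1 th2 : {set T * T}) : {set T * T} := th1 :&: th2.
Definition cong_join (th1 th2 : {set T * T}) : {set T * T} :=
  [set p : T * T | [forall g : {set T * T},
     [forall q : T * T, (q \in th1 :|: th2) ==> (q \in g)] ==>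
     (([forall x : T, (x, x) \in g]) &&
      [forall x : T, forall y : T, ((x, y) \in g) ==> ((y, x) \in g)] &&
      [forall x : T, forall y : T, forall z : T,
          ((x, y) \in g) && ((y, z) \in g) ==> ((x, z) \in g)] &&
      [forall x : T, forall y : T, forall u : T, forall v : T,
          ((x, y) \in g) && ((u, v) \in g) ==>
          ((x `&` u, y `&` v) \in g) && ((x `|` u, y `|` v) \in g)])
     ==> (p \in g)]].

Local Open Scope ring_scope.
Variable F : realFieldType.

(* A diagram: element x is drawn at the point (X x, Y x); each covering
   pair a ≺ b is drawn as the straight segment from (X a,Y a) to (X b,Y b). *)
Definition segX (X : T -> F) (a b : T) (s : F) : F := (1 - s) * X a + s * X b.
Definition segY (Y : T -> F) (a b : T) (s : F) : F := (1 - s) * Y a + s * Y b.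

Definition planar_diagram (X Y : T -> F) : Prop :=
  [/\
      forall x y : T, X x = X y -> Y x = Y y -> x = y,
      forall a b : T, covers a b -> Y a < Y b,
      forall a b c : T, covers a b -> c != a -> c != b ->
        forall s : F, 0 <= s <= 1 -> ~ (segX X a b s = X c /\ segY Y a b s = Y c) &
      forall a b c e : T, covers a b -> covers c e -> (a, b) != (c, e) ->
        forall s t : F, 0 <= s <= 1 -> 0 <= t <= 1 ->
          segX X a b s = segX X c e t -> segY Y a b s = segY Y c e t ->
          exists2 v : T, (v \in [:: a; b]) && (v \in [:: c; e]) &
                          (segX X a b s = X v /\ segY Y a b s = Y v)].

(* Left boundary chain C_l(D): the elements x such that the open horizontal
   ray going to the left from x meets neither a vertex nor an edge of D. *)
Definition in_left_boundary (X Y : T -> F) (x : T) : Prop :=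
  (forall y : T, Y y = Y x -> ~ (X y < X x)) /\
  (forall a b : T, covers a b -> forall s : F, 0 <= s <= 1 ->
      segY Y a b s = Y x -> ~ (segX X a b s < X x)).
Definition in_right_boundary (X Y : T -> F) (x : T) : Prop :=
  (forall y : T, Y y = Y x -> ~ (X x < X y)) /\
  (forall a b : T, covers a b -> forall s : F, 0 <= s <= 1 ->
      segY Y a b s = Y x -> ~ (X x < segX X a b s)).

End LatticeNotions.

Local Open Scope order_scope.

(* A finite lattice is planar if it has a planar Hasse diagram (coordinates
   in some ordered field; by Tarski transfer this is equivalent to R^2). *)
Definition planar_lattice {d} (T : finTBLatticeType d) : Prop :=
  exists (F : realFieldType) (X Y : T -> F), planar_diagram X Y.

Definition rectangular_lattice {d} (T : finTBLatticeType d) : Prop :=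
  semimodular (T := T) /\
  exists (F : realFieldType) (X Y : T -> F),
    planar_diagram X Y /\
    exists cl cr : T,
      [/\
          forall z : T, [/\ in_left_boundary X Y z, z != \bot, z != \top &
                        doubly_irreducible z] <-> z = cl,
          forall z : T, [/\ in_right_boundary X Y z, z != \bot, z != \top &
                        doubly_irreducible z] <-> z = cr,
          cl `&` cr = \bot & cl `|` cr = \top].

(* R is a rectangular extension of L, where L is identified with its image
   under the embedding f : L -> R. *)
Definition rectangular_extension {dL dR}
    (L : finTBLatticeType dL) (R : finTBLatticeType dR) (f : L -> R) : Prop :=
  [/\ rectangular_lattice R,
      injective f /\ (forall x y : L, f (x `&` y) = f x `&` f y /\ f (x `|` y) = f x `|` f y),
      (f \bot = \bot /\ f \top = \top),
      (forall x y : L, covers x y -> covers (f x) (f y)) &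
      forall x : R, (exists2 y : R, covers y x & y \notin codom f) ->
        (#|lower_covers x| <= 2)%N].

Definition restrict_cong {dL dR} {L : finTBLatticeType dL}
    {R : finTBLatticeType dR} (f : L -> R) (th : {set R * R}) : {set L * L} :=
  [set p : L * L | (f p.1, f p.2) \in th].

Definition congruence_preserving_ext {dL dR}
    (L : finTBLatticeType dL) (R : finTBLatticeType dR) (f : L -> R) : Prop :=
  [/\
      forall th : {set R * R}, is_congruence th -> is_congruence (restrict_cong f th),
      forall th1 th2 : {set R * R}, is_congruence th1 -> is_congruence th2 ->
        restrict_cong f th1 = restrict_cong f th2 -> th1 = th2,
      forall ps : {set L * L}, is_congruence ps ->
        exists2 th : {set R * R}, is_congruence th & restrict_cong f th = ps,
      forall th1 th2 : {set R * R}, is_congruence th1 -> is_congruence th2 ->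
        restrict_cong f (cong_meet th1 th2)
        = cong_meet (restrict_cong f th1) (restrict_cong f th2) &
      forall th1 th2 : {set R * R}, is_congruence th1 -> is_congruence th2 ->
        restrict_cong f (cong_join th1 th2)
        = cong_join (restrict_cong f th1) (restrict_cong f th2)].

From HB Require Import structures.
From mathcomp Require Import all_boot all_order all_algebra.
From mathcomp Require Import zify.
Set Implicit Arguments. Unset Strict Implicit. Unset Printing Implicit Defensive.
Import Order.Theory.
Local Open Scope order_scope.

(* Adjoin the elements of R to the image S of L one at a time, keeping S a
   cover-preserving {0,1}-sublattice.  Take b in S minimal above some element
   outside S, and x maximal outside S below b.  As x is a lower cover of b
   outside L, condition (c) and semimodularity force b to have exactly one
   other lower cover y, which is in S; m = x & y is in S and covered by x and
   y, and the meets and joins of x with S are computed from m, y and b.  The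
   quotients [m, x] and [y, b] being perspective, every congruence of S
   extends uniquely to S + x, so restriction Con R -> Con L is an order
   isomorphism, hence a lattice isomorphism. *)

Section Covers.
Context {d : Order.disp_t} {T : finTBLatticeType d}.
Implicit Types (A : {set T}) (a b c m t w x y z : T).

Lemma coversP x y :
  reflect (x < y /\ forall z, x < z -> z < y -> False) (covers x y).
Proof.
apply: (iffP andP) => [[lt /forallP h]|[lt h]]; split => //.
  by move=> z xz zy; have := h z; rewrite xz zy.
by apply/forallP=> z; apply/negP=> /andP[]; exact: h.
Qed.

Lemma covers_lt x y : covers x y -> x < y.
Proof. by case/coversP. Qed.

Lemma covers_le x y : covers x y -> x <= y.
Proof. by move/covers_lt/ltW. Qed.

Lemma covers_between a c z : covers a c -> a <= z -> z <= c -> z = a \/ z = c.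
Proof.
case/coversP=> _ h az zc.
case: (eqVneq z a) => [-> | na]; first by left.
case: (eqVneq z c) => [-> | nc]; first by right.
exfalso; apply: (h z); first by rewrite lt_def na.
by rewrite lt_def eq_sym nc.
Qed.

Lemma card_down_lt x y :
  x < y -> (#|[set t | (t <= x)%O]| < #|[set t | (t <= y)%O]|)%N.
Proof.
move=> xy; apply/proper_card/properP; split.
  by apply/subsetP=> t; rewrite !inE => tx; exact: le_trans tx (ltW xy).
by exists y; rewrite !inE ?lexx // lt_geF.
Qed.

Lemma exists_maximal (P : pred T) w :
  P w -> exists2 c, P c & forall z, P z -> ~ c < z.
Proof.
move=> Pw; have [c Pc cmax] := fintype.arg_maxnP (fun c => #|[set t | t <= c]|) Pw.
by exists c => // z Pz cz; have := cmax z Pz; rewrite /= leqNgt card_down_lt.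
Qed.

Lemma exists_minimal (P : pred T) w :
  P w -> exists2 c, P c & forall z, P z -> ~ z < c.
Proof.
move=> Pw; have [c Pc cmin] := fintype.arg_minnP (fun c => #|[set t | t <= c]|) Pw.
by exists c => // z Pz zc; have := cmin z Pz; rewrite /= leqNgt card_down_lt.
Qed.

Lemma exists_lower_cover_in A w b : w \in A -> w < b ->
  exists c, [/\ c \in A, w <= c, c < b & forall z, z \in A -> c < z -> z < b -> False].
Proof.
move=> wA wb.
have [c /and3P[cA wc cb] cmax] : exists2 c, [&& c \in A, w <= c & c < b] &
    forall z, [&& z \in A, w <= z & z < b] -> ~ c < z.
  by apply: (exists_maximal (w := w)); rewrite /= wA lexx wb.
exists c; split=> // z zA cz zb; apply: (cmax z _ cz).
by rewrite zA zb (le_trans wc (ltW cz)).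
Qed.

Lemma exists_upper_cover_in A m z : z \in A -> m < z ->
  exists c, [/\ c \in A, m < c, c <= z & forall t, t \in A -> m < t -> t < c -> False].
Proof.
move=> zA mz.
have [c /and3P[cA mc cz] cmin] : exists2 c, [&& c \in A, m < c & c <= z] &
    forall t, [&& t \in A, m < t & t <= z] -> ~ t < c.
  by apply: (exists_minimal (w := z)); rewrite /= zA mz lexx.
exists c; split=> // t tA mt tc; apply: (cmin t _ tc).
by rewrite tA mt (le_trans (ltW tc) cz).
Qed.

Lemma exists_lower_cover w b : w < b -> exists2 c, w <= c & covers c b.
Proof.
move=> wb; have [c [_ wc cb cmax]] := exists_lower_cover_in (in_setT w) wb.
by exists c => //; apply/coversP; split=> // z; apply: cmax; rewrite in_setT.
Qed.

Lemma exists_upper_cover m z : m < z -> exists2 c, covers m c & c <= z.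
Proof.
move=> mz; have [c [_ mc cz cmin]] := exists_upper_cover_in (in_setT z) mz.
by exists c => //; apply/coversP; split=> // t; apply: cmin; rewrite in_setT.
Qed.

Lemma card_lower_covers_gt2 t p q r : covers p t -> covers q t -> covers r t ->
  p != q -> p != r -> q != r -> (2 < #|lower_covers t|)%N.
Proof.
move=> pt qt rt pq pr qr.
have sub : p |: (q |: [set r]) \subset lower_covers t.
  by apply/subsetP=> u; rewrite !inE => /or3P[] /eqP->.
by apply: leq_trans (subset_leq_card sub); rewrite !cardsU1 cards1 !inE negb_or pq pr qr.
Qed.

End Covers.

Section Subsets.
Context {d : Order.disp_t} {T : finTBLatticeType d}.
Implicit Types (S : {set T}) (th : {set T * T}) (a c e p q r u v : T).

Definition bounded_sublattice S : Prop :=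
  [/\ \bot \in S, \top \in S &
      forall a c, a \in S -> c \in S -> (a `&` c \in S) /\ (a `|` c \in S)].

Definition cover_preserving S : Prop :=
  forall a c, a \in S -> c \in S -> a < c ->
    (forall z, z \in S -> a < z -> z < c -> False) -> covers a c.

Lemma bounded_sublatticeI S a c :
  bounded_sublattice S -> a \in S -> c \in S -> a `&` c \in S.
Proof. by case=> _ _ SIU aS cS; case: (SIU a c aS cS). Qed.

Lemma bounded_sublatticeU S a c :
  bounded_sublattice S -> a \in S -> c \in S -> a `|` c \in S.
Proof. by case=> _ _ SIU aS cS; case: (SIU a c aS cS). Qed.

Definition congruence_on S th : Prop :=
  [/\ forall a, a \in S -> (a, a) \in th,
      forall a c, a \in S -> c \in S -> (a, c) \in th -> (c, a) \in th,
      forall a c e, a \in S -> c \in S -> e \in S ->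
        (a, c) \in th -> (c, e) \in th -> (a, e) \in th &
      forall a c u v, a \in S -> c \in S -> u \in S -> v \in S ->
        (a, c) \in th -> (u, v) \in th ->
        ((a `&` u, c `&` v) \in th) /\ ((a `|` u, c `|` v) \in th)].

Lemma congruence_onW S th : is_congruence th -> congruence_on S th.
Proof. by case=> h1 h2 h3 h4; split=> *; [apply: h1|apply: h2|apply: h3; eauto|apply: h4]. Qed.

Lemma congruence_on_setT th : congruence_on [set: T] th -> is_congruence th.
Proof.
case=> h1 h2 h3 h4.
by split=> *; [apply: h1|apply: h2|apply: h3|apply: h4]; rewrite ?in_setT //; eauto.
Qed.

Lemma congruence_on_convex S th p q r : congruence_on S th ->
  p \in S -> q \in S -> r \in S -> p <= q -> q <= r -> (p, r) \in th -> (p, q) \in th.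
Proof.
case=> h1 h2 h3 h4 pS qS rS pq qr pr.
have [_ /=] := h4 _ _ _ _ pS rS qS qS pr (h1 _ qS).
rewrite (join_r pq) (join_l qr) => qr'.
exact: h3 pr (h2 _ _ qS rS qr').
Qed.

Lemma congruence_sym th u v : is_congruence th -> ((u, v) \in th) = ((v, u) \in th).
Proof. by case=> _ s _ _; apply/idP/idP; apply: s. Qed.

(* The new element x sits in the covering square m ≺ x ≺ b, m ≺ y ≺ b of S + x. *)
Record adjoinable S x m y b : Prop := Adjoinable {
  adj_notin : x \notin S;
  adj_m : m \in S; adj_y : y \in S; adj_b : b \in S;
  adj_covers_mx : covers m x; adj_covers_xb : covers x b;
  adj_meet : x `&` y = m; adj_join : x `|` y = b;
  adj_above : forall z, z \in S -> x <= z -> b <= z;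
  adj_below : forall z, z \in S -> z <= x -> z <= m;
  adj_meet_in : forall z, z \in S -> ~~ (x <= z) -> x `&` z \in S;
  adj_join_in : forall z, z \in S -> ~~ (z <= x) -> x `|` z \in S;
  adj_meet_b : forall z, z \in S -> ~~ (x <= z) -> b `&` z <= y;
  adj_join_m : forall z, z \in S -> ~~ (z <= x) -> y <= m `|` z }.

End Subsets.

Section Adjoin.
Context {d : Order.disp_t} {T : finTBLatticeType d}.
Variables (S : {set T}) (x m y b : T).
Hypotheses (G : adjoinable S x m y b) (subS : bounded_sublattice S).

Let mS := adj_m G.
Let yS := adj_y G.
Let bS := adj_b G.
Let xS' : x \in x |: S := setU11 x S.
Let SI a c := @bounded_sublatticeI _ _ S a c subS.
Let SU a c := @bounded_sublatticeU _ _ S a c subS.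
Local Ltac in_S := repeat first [ assumption | apply: SI | apply: SU ].

Lemma m_le_x : m <= x. Proof. by rewrite -(adj_meet G) leIl. Qed.
Lemma m_le_y : m <= y. Proof. by rewrite -(adj_meet G) leIr. Qed.
Lemma x_le_b : x <= b. Proof. exact: ltW (covers_lt (adj_covers_xb G)). Qed.
Lemma y_le_b : y <= b. Proof. by rewrite -(adj_join G) leUr. Qed.
Lemma m_le_b : m <= b. Proof. exact: le_trans m_le_x x_le_b. Qed.

Lemma neq_x z : z \in S -> (z == x) = false.
Proof. by move=> zS; apply/negP=> /eqP e; move: (adj_notin G); rewrite -e zS. Qed.

Lemma meet_x z : z \in S -> x `&` z = if x <= z then x else m `&` z.
Proof.
move=> zS; case: ifPn => [/meet_l //| nxz].
have h := adj_meet_in G zS nxz; have h2 := adj_below G h (leIl _ _).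
apply/le_anti; rewrite !lexI h2 leIr (le_trans (leIl _ _) m_le_x) leIr //.
Qed.

Lemma join_x z : z \in S -> x `|` z = if z <= x then x else b `|` z.
Proof.
move=> zS; case: ifPn => [/join_l //| nzx].
have h := adj_join_in G zS nzx; have h2 := adj_above G h (leUl _ _).
apply/le_anti; rewrite !leUx h2 leUr (le_trans x_le_b (leUl _ _)) leUr //.
Qed.

Lemma adjoin_meet a c : a \in x |: S -> c \in x |: S -> a `&` c \in x |: S.
Proof.
have h c' : c' \in S -> x `&` c' \in x |: S.
  move=> cS; rewrite meet_x //; case: ifP => _; first exact: setU11.
  by apply/setU1r; in_S.
case/setU1P=> [->|aS]; case/setU1P=> [->|cS].
- by rewrite meetxx setU11.
- exact: h.
- by rewrite meetC h.
- by apply/setU1r; in_S.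
Qed.

Lemma adjoin_join a c : a \in x |: S -> c \in x |: S -> a `|` c \in x |: S.
Proof.
have h c' : c' \in S -> x `|` c' \in x |: S.
  move=> cS; rewrite join_x //; case: ifP => _; first exact: setU11.
  by apply/setU1r; in_S.
case/setU1P=> [->|aS]; case/setU1P=> [->|cS].
- by rewrite joinxx setU11.
- exact: h.
- by rewrite joinC h.
- by apply/setU1r; in_S.
Qed.

Lemma adjoin_bounded_sublattice : bounded_sublattice (x |: S).
Proof.
have [S0 S1 _] := subS; split; rewrite ?setU1r //.
by move=> a c aS cS; split; [apply: adjoin_meet | apply: adjoin_join].
Qed.

Lemma adjoin_cover_preserving : cover_preserving S -> cover_preserving (x |: S).
Proof.
move=> cpS a c; case/setU1P=> [->|aS]; case/setU1P=> [->|cS].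
- by rewrite ltxx.
- move=> xc h; have bc := adj_above G cS (ltW xc).
  case: (eqVneq b c) => [e|nbc]; first by rewrite -e; exact: (adj_covers_xb G).
  exfalso; apply: (h b); rewrite ?setU1r ?bS ?(covers_lt (adj_covers_xb G)) //.
  by rewrite lt_neqAle nbc bc.
- move=> ax h; have am := adj_below G aS (ltW ax).
  case: (eqVneq a m) => [e|nam]; first by rewrite e; exact: (adj_covers_mx G).
  exfalso; apply: (h m); rewrite ?setU1r ?mS ?(covers_lt (adj_covers_mx G)) //.
  by rewrite lt_neqAle nam am.
- move=> ac h; apply: cpS => // z zS; apply: h; exact: setU1r.
Qed.

(* [m, x] and [y, b] are perspective, so a congruence identifies x with b iff
   it identifies m with y, and x with m iff it identifies y with b. *)
Definition x_class (th : {set T * T}) z :=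
  ((m, y) \in th) && ((z, b) \in th) || ((y, b) \in th) && ((z, m) \in th).

Lemma congruence_x_class th z : is_congruence th -> z \in S ->
  ((x, z) \in th) = x_class th z.
Proof.
move=> C zS; have CT := congruence_onW [set: T] C.
have convex p q w : (p, w) \in th -> p <= q -> q <= w -> (p, q) \in th.
  by move=> pw pq qw; apply: congruence_on_convex CT _ _ _ pq qw pw; rewrite in_setT.
case: C => r s t c.
apply/idP/idP => [xz|].
  case: (boolP (z <= x)) => zx.
    have zm' : (z, m) \in th := convex z m x (s _ _ xz) (adj_below G zS zx) m_le_x.
    have mx : (m, x) \in th by apply: t (s _ _ zm') (s _ _ xz).
    have := proj2 (c _ _ _ _ mx (r y)); rewrite (join_r m_le_y) (adj_join G) => yb.
    by rewrite /x_class yb zm' orbT.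
  have h := proj2 (c _ _ _ _ (r x) xz); rewrite joinxx (join_x zS) (negbTE zx) in h.
  have xb : (x, b) \in th by apply: (convex _ _ _ h x_le_b); apply: leUl.
  have := proj1 (c _ _ _ _ xb (r y)); rewrite (adj_meet G) (meet_r y_le_b) => my.
  by rewrite /x_class my (t _ _ _ (s _ _ xz) xb).
case/orP=> /andP[h1 h2].
  have := proj2 (c _ _ _ _ h1 (r x)); rewrite (join_r m_le_x) joinC (adj_join G) => xb.
  by apply: t xb (s _ _ h2).
have := proj1 (c _ _ _ _ h1 (r x)); rewrite meetC (adj_meet G) (meet_r x_le_b) => mx.
by apply: t (s _ _ mx) (s _ _ h2).
Qed.

Section Extension.
Variable th : {set T * T}.
Hypothesis Cth : congruence_on S th.

Lemma th_refl a : a \in S -> (a, a) \in th.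
Proof. by case: Cth => h _ _ _; apply: h. Qed.
Lemma th_sym {a c} : (a, c) \in th -> a \in S -> c \in S -> (c, a) \in th.
Proof. by case: Cth => _ h _ _ ac aS cS; apply: h. Qed.
Lemma th_trans {a c e} : (a, c) \in th -> (c, e) \in th ->
  a \in S -> c \in S -> e \in S -> (a, e) \in th.
Proof. by case: Cth => _ _ h _ ac ce aS cS eS; apply: (h a c e). Qed.
Lemma th_meet {a c} u : (a, c) \in th -> a \in S -> c \in S -> u \in S ->
  (a `&` u, c `&` u) \in th.
Proof. by case: Cth => _ _ _ h ac aS cS uS; case: (h a c u u) => //; apply: th_refl. Qed.
Lemma th_join {a c} u : (a, c) \in th -> a \in S -> c \in S -> u \in S ->
  (a `|` u, c `|` u) \in th.
Proof. by case: Cth => _ _ _ h ac aS cS uS; case: (h a c u u) => //; apply: th_refl. Qed.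
Lemma th_convex {p q r} : (p, r) \in th -> p <= q -> q <= r ->
  p \in S -> q \in S -> r \in S -> (p, q) \in th.
Proof. by move=> pr pq qr pS qS rS; apply: (congruence_on_convex Cth pS qS rS pq qr pr). Qed.

Lemma x_class_congr z z' : z \in S -> z' \in S -> (z, z') \in th ->
  x_class th z -> x_class th z'.
Proof.
move=> zS z'S zz' /orP[]/andP[h1 h2]; apply/orP; [left|right]; rewrite h1 /=.
  exact: th_trans (th_sym zz' zS z'S) h2 z'S zS bS.
exact: th_trans (th_sym zz' zS z'S) h2 z'S zS mS.
Qed.

Lemma x_class_related a c : a \in S -> c \in S ->
  x_class th a -> x_class th c -> (a, c) \in th.
Proof.
move=> aS cS /orP[]/andP[h1 h2] /orP[]/andP[h3 h4];
  eauto 6 using th_sym, th_trans.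
Qed.

Definition ext_rel a c :=
  if a == x then (c == x) || x_class th c
  else if c == x then x_class th a else (a, c) \in th.

Lemma ext_relS a c : a \in S -> c \in S -> ext_rel a c = ((a, c) \in th).
Proof. by move=> aS cS; rewrite /ext_rel !neq_x. Qed.
Lemma ext_rel_xS c : c \in S -> ext_rel x c = x_class th c.
Proof. by move=> cS; rewrite /ext_rel eqxx neq_x. Qed.
Lemma ext_rel_Sx a : a \in S -> ext_rel a x = x_class th a.
Proof. by move=> aS; rewrite /ext_rel eqxx neq_x. Qed.
Lemma ext_rel_xx : ext_rel x x. Proof. by rewrite /ext_rel eqxx. Qed.

Lemma x_class_meet_m a c : a \in S -> c \in S -> (a, c) \in th ->
  x <= a -> ~~ (x <= c) -> x_class th (m `&` c).
Proof.
move=> aS cS ac xa xc; have ba := adj_above G aS xa.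
have h1 : (c `&` b, b) \in th.
  by have := th_meet (u:=b) (th_sym ac aS cS) cS aS bS; rewrite (meet_r ba).
have cby : c `&` b <= y by rewrite meetC (adj_meet_b G cS xc).
have h2 : (c `&` b, y) \in th by apply: (th_convex h1) => //; try by in_S; exact: y_le_b.
have h3 : (y, b) \in th by eauto 6 using th_sym, th_trans, SI.
have h4 : (m `&` c, m) \in th.
  have := th_meet (u:=m) (th_sym ac aS cS) cS aS mS.
  by rewrite (meet_r (le_trans m_le_x xa)) meetC.
by rewrite /x_class h3 h4 orbT.
Qed.

Lemma x_class_join_b a c : a \in S -> c \in S -> (a, c) \in th ->
  a <= x -> ~~ (c <= x) -> x_class th (b `|` c).
Proof.
move=> aS cS ac ax cx; have am := adj_below G aS ax.
have h1 : (m, c `|` m) \in th.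
  by have := th_join (u:=m) ac aS cS mS; rewrite (join_r am).
have ymc : y <= c `|` m by rewrite joinC (adj_join_m G cS cx).
have h2 : (m, y) \in th by apply: (th_convex h1) => //; try by in_S; exact: m_le_y.
have h3 : (b `|` c, b) \in th.
  have := th_join (u:=b) (th_sym ac aS cS) cS aS bS.
  by rewrite (join_r (le_trans am m_le_b)) joinC.
by rewrite /x_class h2 h3.
Qed.

Lemma ext_rel_meetx a c : a \in S -> c \in S -> (a, c) \in th ->
  ext_rel (a `&` x) (c `&` x).
Proof.
move=> aS cS ac; rewrite ![_ `&` x]meetC !meet_x //.
case: (boolP (x <= a)) => xa; case: (boolP (x <= c)) => xc.
- exact: ext_rel_xx.
- by rewrite ext_rel_xS ?SI // (x_class_meet_m aS cS ac xa xc).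
- by rewrite ext_rel_Sx ?SI // (x_class_meet_m cS aS (th_sym ac aS cS) xc xa).
- by rewrite ext_relS ?SI // meetC [m `&` c]meetC; apply: th_meet.
Qed.

Lemma ext_rel_joinx a c : a \in S -> c \in S -> (a, c) \in th ->
  ext_rel (a `|` x) (c `|` x).
Proof.
move=> aS cS ac; rewrite ![_ `|` x]joinC !join_x //.
case: (boolP (a <= x)) => xa; case: (boolP (c <= x)) => xc.
- exact: ext_rel_xx.
- by rewrite ext_rel_xS ?SU // (x_class_join_b aS cS ac xa xc).
- by rewrite ext_rel_Sx ?SU // (x_class_join_b cS aS (th_sym ac aS cS) xc xa).
- by rewrite ext_relS ?SU // joinC [b `|` c]joinC; apply: th_join.
Qed.

Lemma ext_rel_x_meetS c u : c \in S -> u \in S -> x_class th c ->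
  ext_rel (x `&` u) (c `&` u).
Proof.
move=> cS uS Ec; rewrite meet_x //; case: (boolP (x <= u)) => xu.
  have bu := adj_above G uS xu; rewrite ext_rel_xS ?SI //.
  case/orP: Ec => /andP[h1 h2]; rewrite /x_class.
    by have := th_meet (u:=u) h2 cS bS uS; rewrite (meet_l bu) => ->; rewrite h1.
  have := th_meet (u:=u) h2 cS mS uS; rewrite (meet_l (le_trans m_le_b bu)) => ->.
  by rewrite h1 orbT.
rewrite ext_relS ?SI //.
have e : y `&` u = b `&` u.
  apply/le_anti; rewrite !lexI !leIr !andbT (le_trans (leIl _ _) y_le_b) /=.
  by apply: (adj_meet_b G).
case/orP: Ec => /andP[h1 h2].
  have k1 := th_meet (u:=u) h1 mS yS uS; have k2 := th_meet (u:=u) h2 cS bS uS.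
  rewrite e in k1.
  have : m `&` u \in S by in_S.
  have : b `&` u \in S by in_S.
  have : c `&` u \in S by in_S.
  eauto 6 using th_sym, th_trans.
have k2 := th_meet (u:=u) h2 cS mS uS.
by apply: (th_sym k2); in_S.
Qed.

Lemma ext_rel_x_meetx c : c \in S -> x_class th c -> ext_rel x (c `&` x).
Proof.
move=> cS Ec; rewrite meetC meet_x //.
case: (boolP (x <= c)) => xc; first exact: ext_rel_xx.
rewrite ext_rel_xS ?SI //; rewrite /x_class.
case/orP: Ec => /andP[h1 h2].
  have k1 : (c `&` b, b) \in th by have := th_meet (u:=b) h2 cS bS bS; rewrite meetxx.
  have cby : c `&` b <= y by rewrite meetC (adj_meet_b G cS xc).
  have k2 : (c `&` b, y) \in th.
    by apply: (th_convex k1) => //; try by in_S; exact: y_le_b.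
  have k3 : (y, b) \in th by eauto 6 using th_sym, th_trans, SI.
  have k4 : (m `&` c, m) \in th.
    by have := th_meet (u:=m) h2 cS bS mS; rewrite (meet_r m_le_b) meetC.
  by rewrite k3 k4 orbT.
have k4 : (m `&` c, m) \in th.
  by have := th_meet (u:=m) h2 cS mS mS; rewrite meetxx meetC.
by rewrite h1 k4 orbT.
Qed.

Lemma ext_rel_x_joinS c u : c \in S -> u \in S -> x_class th c ->
  ext_rel (x `|` u) (c `|` u).
Proof.
move=> cS uS Ec; rewrite join_x //; case: (boolP (u <= x)) => ux.
  have um := adj_below G uS ux; rewrite ext_rel_xS ?SU //.
  case/orP: Ec => /andP[h1 h2]; rewrite /x_class.
    have := th_join (u:=u) h2 cS bS uS; rewrite (join_l (le_trans um m_le_b)) => ->.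
    by rewrite h1.
  by have := th_join (u:=u) h2 cS mS uS; rewrite (join_l um) => ->; rewrite h1 orbT.
rewrite ext_relS ?SU //.
case/orP: Ec => /andP[h1 h2].
  have k2 := th_join (u:=u) h2 cS bS uS.
  by apply: (th_sym k2); in_S.
have e : m `|` u = y `|` u.
  apply/le_anti; rewrite !leUx !leUr !andbT (le_trans m_le_y (leUl _ _)) /=.
  by apply: (adj_join_m G).
have k1 := th_join (u:=u) h1 yS bS uS; have k2 := th_join (u:=u) h2 cS mS uS.
rewrite e in k2.
have : y `|` u \in S by in_S.
have : b `|` u \in S by in_S.
have : c `|` u \in S by in_S.
eauto 6 using th_sym, th_trans.
Qed.

Lemma ext_rel_x_joinx c : c \in S -> x_class th c -> ext_rel x (c `|` x).
Proof.
move=> cS Ec; rewrite joinC join_x //.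
case: (boolP (c <= x)) => xc; first exact: ext_rel_xx.
rewrite ext_rel_xS ?SU //; rewrite /x_class.
case/orP: Ec => /andP[h1 h2].
  have k : (c `|` b, b) \in th by have := th_join (u:=b) h2 cS bS bS; rewrite joinxx.
  by rewrite h1 joinC k.
have k1 : (c `|` m, m) \in th by have := th_join (u:=m) h2 cS mS mS; rewrite joinxx.
have ymc : y <= c `|` m by rewrite joinC (adj_join_m G cS xc).
have k2 : (m, y) \in th.
  by apply: (th_convex (th_sym k1 _ _)) => //; try by in_S; exact: m_le_y.
have k3 : (b `|` c, b) \in th.
  by have := th_join (u:=b) h2 cS mS bS; rewrite (join_r m_le_b) joinC.
by rewrite k2 k3.
Qed.

Lemma ext_rel_refl a : a \in x |: S -> ext_rel a a.
Proof.
by case/setU1P=> [->|aS]; [exact: ext_rel_xx | rewrite ext_relS //; apply: th_refl].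
Qed.

Lemma ext_rel_sym a c : a \in x |: S -> c \in x |: S -> ext_rel a c -> ext_rel c a.
Proof.
case/setU1P=> [->|aS]; case/setU1P=> [->|cS] //.
- by rewrite ext_rel_xS // ext_rel_Sx.
- by rewrite ext_rel_xS // ext_rel_Sx.
- by rewrite !ext_relS //; move=> h; apply: th_sym.
Qed.

Lemma ext_rel_trans a c e : a \in x |: S -> c \in x |: S -> e \in x |: S ->
  ext_rel a c -> ext_rel c e -> ext_rel a e.
Proof.
move=> aS' cS' eS'; case/setU1P: cS' => [->|cS].
  case/setU1P: aS' => [->|aS] //; case/setU1P: eS' => [->|eS] //.
  by rewrite ext_rel_Sx // ext_rel_xS // ext_relS // => ha he; apply: x_class_related.
case/setU1P: aS' => [->|aS]; case/setU1P: eS' => [->|eS].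
- by move=> *; apply: ext_rel_xx.
- by rewrite !ext_rel_xS // ext_relS // => Ec ce; apply: (x_class_congr cS eS ce Ec).
- rewrite ext_rel_Sx // ext_relS // ext_rel_Sx // => ac Ec.
  exact: x_class_congr cS aS (th_sym ac aS cS) Ec.
- by rewrite !ext_relS // => ac ce; apply: th_trans ac ce aS cS eS.
Qed.

Lemma ext_rel_x_meet c u : c \in S -> u \in x |: S -> x_class th c ->
  ext_rel (x `&` u) (c `&` u).
Proof.
move=> cS; case/setU1P=> [->|uS] Ec; last exact: ext_rel_x_meetS.
by rewrite meetxx; apply: ext_rel_x_meetx.
Qed.

Lemma ext_rel_x_join c u : c \in S -> u \in x |: S -> x_class th c ->
  ext_rel (x `|` u) (c `|` u).
Proof.
move=> cS; case/setU1P=> [->|uS] Ec; last exact: ext_rel_x_joinS.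
by rewrite joinxx; apply: ext_rel_x_joinx.
Qed.

Lemma ext_rel_meetr a c u : a \in x |: S -> c \in x |: S -> u \in x |: S ->
  ext_rel a c -> ext_rel (a `&` u) (c `&` u).
Proof.
move=> aS' cS' uS'; case/setU1P: (aS') => [ea|aS]; case/setU1P: (cS') => [ec|cS].
- by rewrite ea ec => _; apply/ext_rel_refl/adjoin_meet.
- by rewrite ea ext_rel_xS // => Ec; apply: ext_rel_x_meet.
- rewrite ec ext_rel_Sx // => Ea.
  by apply: ext_rel_sym; [exact: adjoin_meet | exact: adjoin_meet | exact: ext_rel_x_meet].
- rewrite ext_relS // => ac; case/setU1P: uS' => [->|uS]; first exact: ext_rel_meetx.
  by rewrite ext_relS ?SI //; apply: th_meet.
Qed.

Lemma ext_rel_joinr a c u : a \in x |: S -> c \in x |: S -> u \in x |: S ->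
  ext_rel a c -> ext_rel (a `|` u) (c `|` u).
Proof.
move=> aS' cS' uS'; case/setU1P: (aS') => [ea|aS]; case/setU1P: (cS') => [ec|cS].
- by rewrite ea ec => _; apply/ext_rel_refl/adjoin_join.
- by rewrite ea ext_rel_xS // => Ec; apply: ext_rel_x_join.
- rewrite ec ext_rel_Sx // => Ea.
  by apply: ext_rel_sym; [exact: adjoin_join | exact: adjoin_join | exact: ext_rel_x_join].
- rewrite ext_relS // => ac; case/setU1P: uS' => [->|uS]; first exact: ext_rel_joinx.
  by rewrite ext_relS ?SU //; apply: th_join.
Qed.

Definition ext_cong : {set T * T} := [set p | ext_rel p.1 p.2].

Lemma ext_cong_congruence_on : congruence_on (x |: S) ext_cong.
Proof.
split=> [a aS|a c aS cS|a c e aS cS eS|a c u v aS cS uS vS]; rewrite !inE /=.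
- exact: ext_rel_refl.
- exact: ext_rel_sym.
- exact: ext_rel_trans.
move=> ac uv; split.
  apply: (@ext_rel_trans _ (c `&` u)); rewrite ?adjoin_meet //; first exact: ext_rel_meetr.
  by rewrite ![c `&` _]meetC; apply: ext_rel_meetr.
apply: (@ext_rel_trans _ (c `|` u)); rewrite ?adjoin_join //; first exact: ext_rel_joinr.
by rewrite ![c `|` _]joinC; apply: ext_rel_joinr.
Qed.

Lemma ext_cong_agrees a c : a \in S -> c \in S ->
  ((a, c) \in ext_cong) = ((a, c) \in th).
Proof. by move=> aS cS; rewrite inE /= ext_relS. Qed.

End Extension.

End Adjoin.

Section Semimodular.
Context {d : Order.disp_t} {T : finTBLatticeType d}.
Implicit Types (a b c m p q t u v w x y z : T).
Hypothesis semi : semimodular (T := T).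

Lemma semimodularP a b c :
  covers a b -> a `|` c = b `|` c \/ covers (a `|` c) (b `|` c).
Proof. by move=> h; case/orP: (semi c h) => [/eqP|]; [left|right]. Qed.

(* Covers z' <= z and w' <= q of p & q give, by semimodularity, z' ≺ w' | z' <= b
   with w' | z' below neither p nor q. *)
Lemma covers_meet_lower_covers p q b : covers p b -> covers q b -> p != q ->
  (forall w, w < b -> w <= p \/ w <= q) -> covers (p `&` q) p.
Proof.
move=> pb qb pq below_pq.
have mp : p `&` q < p.
  rewrite lt_neqAle leIl andbT; apply/negP=> /eqP/meet_idPl pleq.
  case/coversP: pb => _; apply; last exact: covers_lt qb.
  by rewrite lt_neqAle pq pleq.
have mq : p `&` q < q.
  rewrite lt_neqAle leIr andbT; apply/negP=> /eqP qe.
  have qlep : q <= p by rewrite -qe leIl.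
  case/coversP: qb => _; apply; last exact: covers_lt pb.
  by rewrite lt_neqAle eq_sym pq qlep.
apply/coversP; split=> // z mz zp.
have [z' mz' z'z] := exists_upper_cover mz.
have [w' mw' w'q] := exists_upper_cover mq.
have z'p : z' < p := le_lt_trans z'z zp.
have notw : ~~ (w' <= p).
  apply/negP=> w'p; have : w' <= p `&` q by rewrite lexI w'p w'q.
  by move/(lt_le_trans (covers_lt mw')); rewrite ltxx.
have notz : ~~ (z' <= q).
  apply/negP=> z'q; have : z' <= p `&` q by rewrite lexI (ltW z'p) z'q.
  by move/(lt_le_trans (covers_lt mz')); rewrite ltxx.
case: (semimodularP z' mw'); rewrite (join_r (covers_le mz')).
  by move=> e; move: notw; rewrite (le_trans _ (ltW z'p)) // e leUl.
move=> cz; have tb : w' `|` z' <= b.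
  by rewrite leUx (le_trans w'q (covers_le qb)) (le_trans (ltW z'p) (covers_le pb)).
case: (eqVneq (w' `|` z') b) => [e | ne].
  by case/coversP: cz => _ h; apply: (h p) => //; rewrite e (covers_lt pb).
have tlt : w' `|` z' < b by rewrite lt_neqAle ne tb.
case: (below_pq _ tlt) => h.
  by move: notw; rewrite (le_trans (leUl _ _) h).
by move: notz; rewrite (le_trans (leUr _ _) h).
Qed.

Variable L0 : {set T}.
Hypothesis few_lower_covers : forall t,
  (exists2 w, covers w t & w \notin L0) -> (#|lower_covers t| <= 2)%N.

Section NewElement.
Variables (S : {set T}) (b x y : T).
Hypotheses (L0S : L0 \subset S) (subS : bounded_sublattice S) (cpS : cover_preserving S).
Hypotheses (bS : b \in S) (xS : x \notin S) (xb : x <= b).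
Hypothesis b_min : forall c w, c \in S -> c < b -> w <= c -> w \in S.
Hypothesis x_max : forall z, x < z -> z <= b -> z \in S.
Hypotheses (yS : y \in S) (yb : covers y b).

Let SI a c := @bounded_sublatticeI _ _ S a c subS.
Let SU a c := @bounded_sublatticeU _ _ S a c subS.
Let notL0 w (wS : w \notin S) : w \notin L0 := contra (subsetP L0S w) wS.

Lemma x_lt_b : x < b.
Proof. by rewrite lt_def xb andbT; apply: contraNneq xS => <-. Qed.

Lemma above_x z : z \in S -> x <= z -> b <= z.
Proof.
move=> zS xz; case: (eqVneq (z `&` b) b) => [<-|ne]; first exact: leIl.
have zbb : z `&` b < b by rewrite lt_neqAle ne leIr.
by move: xS; rewrite (b_min (SI zS bS) zbb) // lexI xz xb.
Qed.

Lemma covers_xb : covers x b.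
Proof.
apply/coversP; split=> [|z xz zb]; first exact: x_lt_b.
by move: (above_x (x_max xz (ltW zb)) (ltW xz)); rewrite lt_geF.
Qed.

Lemma x_neq_y : x != y.
Proof. by apply: contraNneq xS => ->. Qed.

Lemma lower_covers_b w : covers w b -> w = x \/ w = y.
Proof.
move=> wb; case: (eqVneq w x) => [->|wx]; first by left.
case: (eqVneq w y) => [->|wy]; first by right.
have : (#|lower_covers b| <= 2)%N.
  by apply: few_lower_covers; exists x; [exact: covers_xb | exact: notL0].
by rewrite leqNgt (card_lower_covers_gt2 covers_xb yb wb x_neq_y) // eq_sym.
Qed.

Lemma below_b w : w < b -> w <= x \/ w <= y.
Proof. by case/exists_lower_cover=> c wc /lower_covers_b[] <-; [left|right]. Qed.

Lemma le_y_of_lt_b s : s \in S -> s < b -> s <= y.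
Proof.
move=> sS sb; have [c [cS sc cb cmax]] := exists_lower_cover_in sS sb.
case: (lower_covers_b (cpS cS bS cb cmax)) => ce; last by rewrite -ce.
by move: xS; rewrite -ce cS.
Qed.

Lemma meet_xy_in : x `&` y \in S.
Proof. by apply: (b_min yS (covers_lt yb)); rewrite leIr. Qed.

Lemma covers_meet_x : covers (x `&` y) x.
Proof. exact: covers_meet_lower_covers covers_xb yb x_neq_y below_b. Qed.

Lemma covers_meet_y : covers (x `&` y) y.
Proof.
rewrite meetC; apply: covers_meet_lower_covers yb covers_xb _ _.
  by rewrite eq_sym x_neq_y.
by move=> w /below_b[]; [right|left].
Qed.

Lemma below_x z : z \in S -> z <= x -> z <= x `&` y.
Proof. by move=> zS zx; rewrite lexI zx le_y_of_lt_b // (le_lt_trans zx x_lt_b). Qed.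

Lemma meet_x_in z : z \in S -> ~~ (x <= z) -> x `&` z \in S.
Proof.
move=> zS nxz; have ne : z `&` b != b.
  by apply: contraNneq nxz => e; rewrite (le_trans xb) // -e leIl.
apply: (b_min (SI zS bS)); first by rewrite lt_neqAle ne leIr.
by rewrite lexI leIr (le_trans (leIl _ _) xb).
Qed.

Lemma meet_b_le_y z : z \in S -> ~~ (x <= z) -> b `&` z <= y.
Proof.
move=> zS nxz; have ne : b `&` z != b.
  by apply: contraNneq nxz => e; rewrite (le_trans xb) // -e leIr.
by apply: le_y_of_lt_b; rewrite ?SI // lt_neqAle ne leIl.
Qed.

Lemma join_xy : x `|` y = b.
Proof.
have xyb : x `|` y <= b by rewrite leUx xb covers_le.
case: (covers_between covers_xb (leUl x y) xyb) => // /join_idPl yx; exfalso.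
case/coversP: yb => _ h; apply: (h x); last exact: x_lt_b.
by rewrite lt_neqAle eq_sym x_neq_y yx.
Qed.

Lemma join_x_in_of_le a : a \in S -> b <= x `|` a -> x `|` a \in S.
Proof.
move=> aS bxa; suff -> : x `|` a = b `|` a by apply: SU.
by apply/le_anti; rewrite !leUx (le_trans xb (leUl _ _)) !leUr bxa.
Qed.

(* Otherwise x | a and y | a would be distinct lower covers of
   t := (x | a) | (y | a) and, with a lower cover of t above b < t, give
   three lower covers of t, one of them x | a outside L0. *)
Lemma y_le_join_x a : a \in S -> ~~ (a <= x) -> a `&` b <= x -> x `|` a \notin S ->
  y <= x `|` a.
Proof.
move=> aS nax abx xaS; apply/contraT => nya.
have mxa : x `&` y `|` a <= x `|` a by rewrite leUx leUr (le_trans (leIl x y) (leUl x a)).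
case: (semimodularP a covers_meet_x) => [e1|c1].
  by move: xaS; rewrite -e1 SU ?meet_xy_in.
case: (semimodularP a covers_meet_y) => [e2|c2].
  by move: nya; rewrite (le_trans (leUl y a)) // -e2.
have ne : x `|` a != y `|` a by apply: contraNneq nya => ->; rewrite leUl.
have noxy : ~~ (x `|` a <= y `|` a).
  apply/negP=> le1; case: (covers_between c2 (covers_le c1) le1) => e.
    by move: (covers_lt c1); rewrite e ltxx.
  by rewrite e eqxx in ne.
case: (semimodularP (y `|` a) c1); rewrite (join_r (covers_le c2)).
  by move=> e3; move: noxy; rewrite e3 leUl.
move=> c3; case: (semimodularP (x `|` a) c2); rewrite (join_r (covers_le c1)).
  by move=> e4; move: nya; rewrite (le_trans (leUl y a)) // e4 leUl.
rewrite [X in covers _ X]joinC => c4.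
set t := (x `|` a) `|` (y `|` a) in c3 c4.
have bt : b <= t.
  by rewrite -join_xy leUx (le_trans (leUl x a) (leUl _ _)) (le_trans (leUl y a) (leUr _ _)).
have bt' : b < t.
  rewrite lt_def bt andbT; apply: contraNneq nax => tb.
  apply: le_trans abx; rewrite lexI lexx -tb.
  exact: le_trans (leUr a x) (leUl _ _).
have [v bv vt] := exists_lower_cover bt'.
have v1 : x `|` a != v.
  by apply: contraNneq nya => ->; exact: le_trans (covers_le yb) bv.
have v2 : y `|` a != v.
  apply: contraNneq noxy => yav.
  by rewrite leUx leUr andbT yav (le_trans xb bv).
have : (#|lower_covers t| <= 2)%N.
  by apply: few_lower_covers; exists (x `|` a); [exact: c4 | exact: notL0].
by rewrite leqNgt (card_lower_covers_gt2 c4 c3 vt ne v1 v2).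
Qed.

Lemma join_x_in a : a \in S -> ~~ (a <= x) -> x `|` a \in S.
Proof.
move=> aS nax; case: (boolP (a `&` b <= x)) => abx; last first.
  apply: join_x_in_of_le => //.
  have xabb : x `|` (a `&` b) <= b by rewrite leUx xb leIr.
  case: (covers_between covers_xb (leUl x (a `&` b)) xabb) => [/join_idPl abx'|<-].
    by rewrite abx' in abx.
  by rewrite leUx leUl (le_trans (leIl _ _) (leUr _ _)).
have /orP[//|xaS] := orbN (x `|` a \in S).
apply: join_x_in_of_le => //; rewrite -join_xy leUx leUl.
exact: y_le_join_x.
Qed.

Lemma y_le_join_m z : z \in S -> ~~ (z <= x) -> y <= x `&` y `|` z.
Proof.
move=> zS nzx; set m := x `&` y.
have m_lt_mz : m < m `|` z.
  rewrite lt_def leUl andbT; apply: contraNneq nzx => /join_idPl zm.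
  exact: le_trans zm (leIl x y).
have [v [vS mv vmz vmin]] := exists_upper_cover_in (SU meet_xy_in zS) m_lt_mz.
have mcv : covers m v := cpS meet_xy_in vS mv vmin.
suff <- : v = y by [].
case: (eqVneq v y) => [//|vy]; exfalso.
have nvx : ~~ (v <= x).
  by apply/negP=> vx; move: (below_x vS vx); rewrite (lt_geF mv).
case: (semimodularP x mcv); rewrite (join_r (leIl x y)).
  by move=> e; move: nvx; rewrite e leUl.
move=> xvx; have vxb : v `|` x = b.
  have bvx : b <= v `|` x by apply: above_x; rewrite ?leUr // joinC join_x_in.
  case: (covers_between xvx xb bvx) => // e.
  by move: x_lt_b; rewrite e ltxx.
case: (semimodularP v covers_meet_x); rewrite (join_r (ltW mv)) joinC vxb.
  move=> e; case/coversP: mcv => _ h; apply: (h x (covers_lt covers_meet_x)).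
  by rewrite e x_lt_b.
case/lower_covers_b=> e; last by rewrite e eqxx in vy.
by move: xS; rewrite -e vS.
Qed.

Lemma adjoinable_meet : adjoinable S x (x `&` y) y b.
Proof.
split=> //; [exact: meet_xy_in | exact: covers_meet_x | exact: covers_xb
  | exact: join_xy | exact: above_x | exact: below_x | exact: meet_x_in
  | exact: join_x_in | exact: meet_b_le_y | exact: y_le_join_m].
Qed.

End NewElement.

Lemma exists_adjoinable (S : {set T}) x0 :
  L0 \subset S -> bounded_sublattice S -> cover_preserving S ->
  x0 \notin S -> exists x m y b, adjoinable S x m y b.
Proof.
move=> L0S subS cpS x0S.
have [|b /andP[bS /existsP[w0 /andP[w0b w0S]]] b_minimal] :=
  @exists_minimal _ _ (fun b => (b \in S) && [exists w, (w <= b) && (w \notin S)]) \top.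
  by case: subS => _ -> _; apply/existsP; exists x0; rewrite lex1 x0S.
have b_min c w : c \in S -> c < b -> w <= c -> w \in S.
  move=> cS cb wc; apply/negPn/negP=> wS; apply: (b_minimal c) cb.
  by rewrite cS; apply/existsP; exists w; rewrite wc wS.
have [|x /andP[xb xS] x_maximal] :=
  @exists_maximal _ _ (fun x => (x <= b) && (x \notin S)) w0.
  by rewrite w0b w0S.
have x_max z : x < z -> z <= b -> z \in S.
  by move=> xz zb; apply/negPn/negP=> zS; apply: (x_maximal z) xz; rewrite zb zS.
have [botS _ _] := subS.
have [y [yS _ yb ymax]] :=
  exists_lower_cover_in botS (le_lt_trans (le0x x) (x_lt_b bS xS xb)).
exists x, (x `&` y), y, b.
exact: adjoinable_meet L0S subS cpS bS xS xb b_min x_max yS (cpS _ _ yS bS yb ymax).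
Qed.

Definition admissible (S : {set T}) : Prop :=
  [/\ L0 \subset S, bounded_sublattice S & cover_preserving S].

Lemma admissible_step (S : {set T}) n : admissible S -> #|~: S| = n.+1 ->
  exists x m y b,
    [/\ adjoinable S x m y b, admissible (x |: S) & #|~: (x |: S)| = n].
Proof.
move=> [L0S subS cpS] cardS.
have [x0] : exists x0, x0 \in ~: S by apply/card_gt0P; rewrite cardS.
rewrite inE => /(exists_adjoinable L0S subS cpS)[x [m [y [b G]]]].
exists x, m, y, b; split=> //.
  split; first exact: subset_trans L0S (subsetUr _ _).
    exact: adjoin_bounded_sublattice G subS.
  exact: adjoin_cover_preserving G cpS.
by move: (cardsC S) (cardsC (x |: S)); rewrite cardsU1 (adj_notin G) cardS; lia.
Qed.

Lemma setT_of_cardsC0 (S : {set T}) : #|~: S| = 0 -> S = [set: T].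
Proof. by move=> h; rewrite -[S]setCK (cards0_eq h) setC0. Qed.

Lemma extend_congruence_on (S : {set T}) th : admissible S -> congruence_on S th ->
  exists2 th', is_congruence th' & {in S &, forall a c, ((a, c) \in th') = ((a, c) \in th)}.
Proof.
move Hn : #|~: S| => n; elim: n S Hn th => [|n IH] S cardS th admS Cth.
  exists th => //; apply: congruence_on_setT.
  by rewrite -(setT_of_cardsC0 cardS).
have [x [m [y [b [G admS' cardS']]]]] := admissible_step admS cardS.
have [_ subS _] := admS.
have [th' Cth' agree] := IH _ cardS' _ admS' (ext_cong_congruence_on G subS Cth).
exists th' => // a c aS cS.
by rewrite agree ?setU1r // (ext_cong_agrees G).
Qed.

Lemma congruence_eq_of_agree_on (S : {set T}) th1 th2 : admissible S ->
  is_congruence th1 -> is_congruence th2 ->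
  {in S &, forall a c, ((a, c) \in th1) = ((a, c) \in th2)} -> th1 = th2.
Proof.
move Hn : #|~: S| => n; elim: n S Hn => [|n IH] S cardS admS C1 C2 agree.
  apply/setP=> -[a c]; apply: agree; by rewrite (setT_of_cardsC0 cardS) in_setT.
have [x [m [y [b [G admS' cardS']]]]] := admissible_step admS cardS.
apply: (IH _ cardS' admS' C1 C2).
have agree_x z : z \in S -> ((x, z) \in th1) = ((x, z) \in th2).
  move=> zS; rewrite (congruence_x_class G C1 zS) (congruence_x_class G C2 zS).
  by rewrite /x_class !agree ?(adj_m G) ?(adj_y G) ?(adj_b G).
move=> a c /setU1P[->|aS] /setU1P[->|cS].
- by case: C1 => r1 _ _ _; case: C2 => r2 _ _ _; rewrite r1 r2.
- exact: agree_x.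
- by rewrite (congruence_sym _ _ C1) (congruence_sym _ _ C2) agree_x.
- exact: agree.
Qed.

End Semimodular.

Section CongruenceLattice.
Context {d : Order.disp_t} {T : finTBLatticeType d}.
Implicit Types (th g : {set T * T}).

Lemma is_congruenceP g : reflect (is_congruence g)
  ([forall x : T, (x, x) \in g] &&
   [forall x : T, forall y : T, ((x, y) \in g) ==> ((y, x) \in g)] &&
   [forall x : T, forall y : T, forall z : T,
      ((x, y) \in g) && ((y, z) \in g) ==> ((x, z) \in g)] &&
   [forall x : T, forall y : T, forall u : T, forall v : T,
      ((x, y) \in g) && ((u, v) \in g) ==>
      ((x `&` u, y `&` v) \in g) && ((x `|` u, y `|` v) \in g)]).
Proof.
apply: (iffP idP) =>
  [/andP[/andP[/andP[/forallP r /forallP s] /forallP t] /forallP c]|[r s t c]].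
  split=> [x|x y xy|x y z xy yz|x y u v xy uv].
  - exact: r.
  - by move/forallP: (s x) => /(_ y) /implyP; apply.
  - by move/forallP: (t x) => /(_ y) /forallP /(_ z) /implyP; apply; rewrite xy yz.
  - move/forallP: (c x) => /(_ y) /forallP /(_ u) /forallP /(_ v) /implyP.
    by rewrite xy uv => /(_ isT) /andP[].
rewrite -!andbA; apply/and4P; split.
- exact/forallP.
- by apply/forallP=> x; apply/forallP=> y; apply/implyP; apply: s.
- by apply/forallP=> x; apply/forallP=> y; apply/forallP=> z; apply/implyP=> /andP[]; apply: t.
- apply/forallP=> x; apply/forallP=> y; apply/forallP=> u; apply/forallP=> v.
  by apply/implyP=> /andP[xy uv]; case: (c _ _ _ _ xy uv) => -> ->.
Qed.

Lemma cong_joinP th1 th2 p :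
  reflect (forall g, th1 :|: th2 \subset g -> is_congruence g -> p \in g)
          (p \in cong_join th1 th2).
Proof.
rewrite inE; apply: (iffP forallP) => [h g sg /is_congruenceP cg | h g].
  have sg' : [forall q, (q \in th1 :|: th2) ==> (q \in g)].
    by apply/forallP=> q; apply/implyP; exact: (subsetP sg).
  by move: (h g); rewrite sg' cg.
apply/implyP=> /forallP sg; apply/implyP=> /is_congruenceP cg; apply: h cg.
by apply/subsetP=> q; apply/implyP/sg.
Qed.

Lemma cong_join_congruence th1 th2 : is_congruence (cong_join th1 th2).
Proof.
split.
- by move=> x; apply/cong_joinP=> g _ [r _ _ _].
- move=> x y /cong_joinP h; apply/cong_joinP=> g sg cg; case: (cg) => _ s _ _.
  by apply: s; apply: h.
- move=> x y z /cong_joinP h1 /cong_joinP h2; apply/cong_joinP=> g sg cg.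
  by case: (cg) => _ _ t _; apply: t (h1 g sg cg) (h2 g sg cg).
- move=> x y u v /cong_joinP h1 /cong_joinP h2.
  have K g : th1 :|: th2 \subset g -> is_congruence g ->
     ((x `&` u, y `&` v) \in g) /\ ((x `|` u, y `|` v) \in g).
    by move=> sg cg; case: (cg) => _ _ _ c; apply: c (h1 g sg cg) (h2 g sg cg).
  by split; apply/cong_joinP=> g sg cg; case: (K g sg cg).
Qed.

Lemma setU_subset_cong_join th1 th2 : th1 :|: th2 \subset cong_join th1 th2.
Proof. by apply/subsetP=> p hp; apply/cong_joinP=> g sg _; exact: (subsetP sg p hp). Qed.

Lemma congruenceI th1 th2 : is_congruence th1 -> is_congruence th2 ->
  is_congruence (th1 :&: th2).
Proof.
case=> r1 s1 t1 c1 [r2 s2 t2 c2]; split.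
- by move=> x; rewrite inE; apply/andP; split; [apply: r1 | apply: r2].
- move=> x y; rewrite !inE => /andP[h1 h2].
  by apply/andP; split; [apply: s1 | apply: s2].
- move=> x y z; rewrite !inE => /andP[h1 h2] /andP[h3 h4].
  by apply/andP; split; [apply: t1 h1 h3 | apply: t2 h2 h4].
- move=> x y u v; rewrite !inE => /andP[h1 h2] /andP[h3 h4].
  have [k1 k2] := c1 _ _ _ _ h1 h3; have [k3 k4] := c2 _ _ _ _ h2 h4.
  by split; apply/andP; split.
Qed.

End CongruenceLattice.

Section Restriction.
Context {dL dR : Order.disp_t} {L : finTBLatticeType dL} {R : finTBLatticeType dR}.
Variable f : L -> R.
Hypotheses (f_inj : injective f)
  (f_morph : forall x y, f (x `&` y) = f x `&` f y /\ f (x `|` y) = f x `|` f y)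
  (f_bot : f \bot = \bot) (f_top : f \top = \top)
  (f_covers : forall x y, covers x y -> covers (f x) (f y)).
Hypothesis semi : semimodular (T := R).
Hypothesis few_lower_covers : forall t : R,
  (exists2 w, covers w t & w \notin codom f) -> (#|lower_covers t| <= 2)%N.

Let image : {set R} := [set t | t \in codom f].

Lemma f_meet x y : f (x `&` y) = f x `&` f y. Proof. by case: (f_morph x y). Qed.
Lemma f_join x y : f (x `|` y) = f x `|` f y. Proof. by case: (f_morph x y). Qed.

Lemma f_le x y : (f x <= f y) = (x <= y).
Proof.
apply/idP/idP => h; last by move/meet_idPl: h => <-; rewrite f_meet leIr.
by apply/meet_idPl; apply: f_inj; rewrite f_meet; apply/meet_idPl.
Qed.

Lemma f_lt x y : (f x < f y) = (x < y).
Proof. by rewrite !lt_neqAle f_le (inj_eq f_inj). Qed.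

Lemma admissible_image : admissible image image.
Proof.
split=> //.
  split; rewrite ?inE -?f_bot -?f_top ?codom_f //.
  move=> a c; rewrite !inE => /codomP[a' ->] /codomP[c' ->].
  by rewrite -f_meet -f_join !codom_f.
move=> a c; rewrite !inE => /codomP[a' ->] /codomP[c' ->] lt h.
apply: f_covers; apply/coversP; split; first by rewrite -f_lt.
by move=> z' az zc; apply: (h (f z')); rewrite ?inE ?codom_f ?f_lt.
Qed.

Lemma few_lower_covers_image t :
  (exists2 w, covers w t & w \notin image) -> (#|lower_covers t| <= 2)%N.
Proof. by case=> w wt; rewrite inE => wf; apply: few_lower_covers; exists w. Qed.

Lemma in_restrict_cong th (p : L * L) :
  (p \in restrict_cong f th) = ((f p.1, f p.2) \in th).
Proof. by rewrite inE. Qed.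

Lemma restrict_congruence th : is_congruence th -> is_congruence (restrict_cong f th).
Proof.
case=> r s t c; split.
- by move=> x; rewrite inE /=; apply: r.
- by move=> x y; rewrite !inE /=; apply: s.
- by move=> x y z; rewrite !inE /=; apply: t.
- by move=> x y u v; rewrite !inE /= => h1 h2; rewrite !f_meet !f_join; apply: c.
Qed.

Lemma restrict_cong_inj th1 th2 : is_congruence th1 -> is_congruence th2 ->
  restrict_cong f th1 = restrict_cong f th2 -> th1 = th2.
Proof.
move=> C1 C2 e.
apply: (congruence_eq_of_agree_on semi few_lower_covers_image admissible_image C1 C2).
move=> a c; rewrite !inE => /codomP[a' ->] /codomP[c' ->].
by move/setP: e => /(_ (a', c')); rewrite !inE.
Qed.

Lemma restrict_cong_surj ps : is_congruence ps ->
  exists2 th, is_congruence th & restrict_cong f th = ps.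
Proof.
move=> [r s t c].
pose fpair (q : L * L) := (f q.1, f q.2).
have fpair_inj : injective fpair by move=> [a b] [a' b'] /= [/f_inj -> /f_inj ->].
pose psi := fpair @: ps.
have in_psi a a' : ((f a, f a') \in psi) = ((a, a') \in ps).
  by rewrite -(mem_imset _ _ fpair_inj).
have Cpsi : congruence_on image psi.
  split.
  - by move=> a; rewrite inE => /codomP[a' ->]; rewrite in_psi; apply: r.
  - by move=> a a2; rewrite !inE => /codomP[a' ->] /codomP[a2' ->]; rewrite !in_psi; apply: s.
  - move=> a a2 a3; rewrite !inE => /codomP[a' ->] /codomP[a2' ->] /codomP[a3' ->].
    by rewrite !in_psi; apply: t.
  - move=> a a2 a3 a4; rewrite !inE.
    move=> /codomP[a' ->] /codomP[a2' ->] /codomP[a3' ->] /codomP[a4' ->].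
    by rewrite -!f_meet -!f_join !in_psi; apply: c.
have [th Cth agree] :=
  extend_congruence_on semi few_lower_covers_image admissible_image Cpsi.
by exists th => //; apply/setP=> -[a a']; rewrite inE /= agree ?inE ?codom_f // in_psi.
Qed.

Lemma restrict_cong_meet th1 th2 : restrict_cong f (cong_meet th1 th2)
  = cong_meet (restrict_cong f th1) (restrict_cong f th2).
Proof. by apply/setP=> p; rewrite !inE. Qed.

Lemma restrict_cong_subset th1 th2 : is_congruence th1 -> is_congruence th2 ->
  restrict_cong f th1 \subset restrict_cong f th2 -> th1 \subset th2.
Proof.
move=> C1 C2 sub12.
suff <- : th1 :&: th2 = th1 by exact: subsetIr.
apply: (restrict_cong_inj (congruenceI C1 C2) C1).
apply/setP=> p; rewrite !inE; apply: andb_idr => h.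
by move/subsetP: sub12 => /(_ p); rewrite !inE; apply.
Qed.

Lemma restrict_cong_join th1 th2 : is_congruence th1 -> is_congruence th2 ->
  restrict_cong f (cong_join th1 th2)
  = cong_join (restrict_cong f th1) (restrict_cong f th2).
Proof.
move=> C1 C2; apply/setP=> p; apply/idP/idP.
  rewrite in_restrict_cong => hp; apply/cong_joinP=> g sg Cg.
  have [tg Ctg etg] := restrict_cong_surj Cg; subst g.
  have sub12 : th1 :|: th2 \subset tg.
    rewrite subUset; apply/andP; split; apply: restrict_cong_subset => //;
      apply: subset_trans _ sg; [exact: subsetUl | exact: subsetUr].
  by move/cong_joinP: hp => /(_ tg sub12 Ctg); rewrite in_restrict_cong.
move/cong_joinP; apply; last exact/restrict_congruence/cong_join_congruence.
rewrite subUset; apply/andP; split; apply/subsetP=> q; rewrite !in_restrict_cong => hq;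
  by apply: (subsetP (setU_subset_cong_join _ _)); rewrite in_setU hq ?orbT.
Qed.

End Restriction.

Theorem mainTheorem2 (dL dR : Order.disp_t)
    (L : finTBLatticeType dL) (R : finTBLatticeType dR) (f : L -> R) :
  planar_lattice L -> semimodular (T := L) -> (2 < #|L|)%N ->
  rectangular_extension f ->
  congruence_preserving_ext f.
Proof.
move=> _ _ _ [[semi _] [f_inj f_morph] [f_bot f_top] f_covers few_lower_covers].
split.
- exact: restrict_congruence f_morph.
- exact: restrict_cong_inj f_inj f_morph f_bot f_top f_covers semi few_lower_covers.
- exact: restrict_cong_surj f_inj f_morph f_bot f_top f_covers semi few_lower_covers.
- by move=> *; exact: restrict_cong_meet.
- exact: restrict_cong_join f_inj f_morph f_bot f_top f_covers semi few_lower_covers.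
Qed.
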